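(* Let $b,c\in Z^{10}$ with $\sum_i b_i=\sum_i c_i=0$. Suppose there are distinct odd indices $i_1,i_2,i_3\in\{1,3,5,7,9\}$ such that $t\nmid B_{i_l}$ for $l=1,2,3$ and $t\mid B_i$ for the two remaining odd $i$, and distinct odd indices $j_1,j_2,j_3$ such that $t\nmid C_{j_l}$ for $l=1,2,3$ and $t\mid C_j$ for the two remaining odd $j$. Then $\mathbb{M}(b)\cong\mathbb{M}(c)$ as $B_{5,10}$-modules if and only if $\{i_1,i_2,i_3\}=\{j_1,j_2,j_3\}$.
   Context: Let $Z=\mathbb{C}[[t]]$. Let $\Gamma_{10}$ be the quiver with vertices $0,1,\dots,9$ (indices taken mod $10$) on a cycle and arrows $x_i\colon i-1\to i$, $y_i\colon i\to i-1$ for $i=1,\dots,10$. Let $B_{5,10}$ be the completed path algebra of $\Gamma_{10}$ modulo the closed ideal generated by $xy=yx$ and $x^5=y^5$ at every vertex. For $b=(b_1,\dots,b_{10})\in Z^{10}$ with $\sum_i b_i=0$, the $B_{5,10}$-module $\mathbb{M}(b)$ has $V_i=Z\oplus Z$ at every vertex, and for odd $j$: $x_j=\begin{pmatrix} t& b_j\\ 0&1\end{pmatrix}$, $y_j=\begin{pmatrix} 1&-b_j\\0&t\end{pmatrix}$; for even $j$: $x_j=\begin{pmatrix}1&b_j\\0&t\end{pmatrix}$, $y_j=\begin{pmatrix}t&-b_j\\0&1\end{pmatrix}$. An isomorphism $\mathbb{M}(b)\to\mathbb{M}(c)$ is a family of invertible $Z$-linear maps $\varphi_i\colon Z^2\to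 Z^2$ commuting with all $x_i$ and $y_i$. For odd $i$ write $B_i=b_i+b_{i+1}$ and $C_i=c_i+c_{i+1}$ (indices mod $10$). *)

From mathcomp Require Import all_boot all_algebra.
From mathcomp Require Import complex.
From mathcomp Require Import Rstruct.

Set Implicit Arguments.
Unset Strict Implicit.
Unset Printing Implicit Defensive.
Import GRing.Theory.
Local Open Scope ring_scope.

Definition CC : fieldType := Rdefinitions.R[i].

(* Formal power series Z = K[[t]]: a series is its coefficient sequence. *)
Definition ps (K : fieldType) := nat -> K.

Definition ps0 {K : fieldType} : ps K := fun _ => 0.
Definition ps1 {K : fieldType} : ps K := fun n => if n == 0%N then 1 else 0.
Definition ps_t {K : fieldType} : ps K := fun n => if n == 1%N then 1 else 0.
Definition ps_add {K : fieldType} (f g : ps K) : ps K := fun n => f n + g n.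
Definition ps_opp {K : fieldType} (f : ps K) : ps K := fun n => - f n.
Definition ps_mul {K : fieldType} (f g : ps K) : ps K :=
  fun n => \sum_(i < n.+1) f i * g (n - i)%N.
Definition ps_dvd {K : fieldType} (a f : ps K) : Prop := exists g, f = ps_mul a g.

(* 2x2 matrices over Z, i.e. Z-linear maps Z^2 -> Z^2 (acting on columns). *)
Definition mk2 {K : fieldType} (a b c d : ps K) : 'M[ps K]_2 :=
  \matrix_(i < 2, j < 2)
    if i == ord0 then (if j == ord0 then a else b) else (if j == ord0 then c else d).
Definition mx1 {K : fieldType} : 'M[ps K]_2 := mk2 ps1 ps0 ps0 ps1.
Definition mx_mul {K : fieldType} (A B : 'M[ps K]_2) : 'M[ps K]_2 :=
  \matrix_(i < 2, j < 2)
    ps_add (ps_mul (A i ord0) (B ord0 j)) (ps_mul (A i ord_max) (B ord_max j)).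
Definition mx_invertible {K : fieldType} (A : 'M[ps K]_2) : Prop :=
  exists B, mx_mul B A = mx1 /\ mx_mul A B = mx1.

(* The module M(b): b j for j = 1..10 are the parameters b_1..b_10.
   Arrow x_j : (j-1) -> (j mod 10), y_j : (j mod 10) -> (j-1). *)
Definition xmap {K : fieldType} (b : nat -> ps K) (j : nat) : 'M[ps K]_2 :=
  if odd j then mk2 ps_t (b j) ps0 ps1 else mk2 ps1 (b j) ps0 ps_t.
Definition ymap {K : fieldType} (b : nat -> ps K) (j : nat) : 'M[ps K]_2 :=
  if odd j then mk2 ps1 (ps_opp (b j)) ps0 ps_t
  else mk2 ps_t (ps_opp (b j)) ps0 ps1.

(* M(b) ~= M(c): a family phi_v (v = 0..9) of invertible Z-linear maps
   commuting with all x_j and y_j (j = 1..10). *)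
Definition Miso {K : fieldType} (b c : nat -> ps K) : Prop :=
  exists phi : nat -> 'M[ps K]_2,
    (forall v, (v < 10)%N -> mx_invertible (phi v)) /\
    (forall j, (1 <= j <= 10)%N ->
       mx_mul (phi (j %% 10)%N) (xmap b j) = mx_mul (xmap c j) (phi j.-1) /\
       mx_mul (phi j.-1) (ymap b j) = mx_mul (ymap c j) (phi (j %% 10)%N)).

(* B_i = b_i + b_{i+1} for odd i in {1,3,5,7,9} (no wrap-around needed) *)
Definition Bsum {K : fieldType} (b : nat -> ps K) (i : nat) : ps K :=
  ps_add (b i) (b i.+1).

Definition odd_idx : seq nat := [:: 1; 3; 5; 7; 9]%N.

Definition sum_zero {K : fieldType} (b : nat -> ps K) : Prop :=
  forall n, \sum_(1 <= k < 11) b k n = 0.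

(* Necessity ([iso_residues]): reading the intertwining relations for the
   arrows x_(2k+1), x_(2k+2) in degrees 0 and 1 eliminates the component at
   vertex 2k+1 and gives  B_(2k+1)(0) p = C_(2k+1)(0) w  where p, w are the
   (unit) diagonal constant terms of the components at vertices 2k, 2k+2.

   Sufficiency ([iso_of_conic]): given constants a, d, g with a d <> 0, put
   H(X, Y) = Y d - X a - g X Y and take at vertex v the matrix
   [[a + g Y, H], [g, d - g X]] (v odd), resp. its conjugate by diag(1, t)
   (v even), where X, Y are the partial sums b_1 + ... + b_v, c_1 + ... + c_v.
   These have determinant a d and intertwine all arrows, provided t | H at
   even vertices, i.e. the conic  y d - x a - g x y = 0  passes through the
   residues of the partial sums at even vertices.  With three unit indices
   these residues are only the origin and two points P, Q, and a conic through
   them exists ([conic_through_partial_sums]). *)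

From mathcomp Require Import all_boot all_algebra.
From mathcomp Require Import ring zify.
Set Implicit Arguments.
Unset Strict Implicit.
Unset Printing Implicit Defensive.
Import GRing.Theory.
Local Open Scope ring_scope.

(* [coef_ring] proves identities in a MathComp commutative ring (the
   coefficient field); [ring] is rebound below to the Stdlib tactic, which we
   instantiate on the ring of formal power series. *)
Ltac coef_ring := ring.
From Stdlib Require Import Ring FunctionalExtensionality.

Section Theory.

Variable K : fieldType.
Implicit Types (f h p q r w : ps K) (x y e : K).

Lemma psE f g : (forall n, f n = g n) -> f = g.
Proof. exact: functional_extensionality. Qed.

Definition trunc (N : nat) f : {poly K} := \poly_(j < N) f j.
Definition agree (N : nat) f (p : {poly K}) := forall i, (i < N)%N -> f i = p`_i.

Lemma agree_trunc N f : agree N f (trunc N f).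
Proof. by move=> i Hi; rewrite coef_poly Hi. Qed.
Arguments agree_trunc : clear implicits.

Lemma agree_1 N : agree N ps1 1.
Proof. by move=> i _; rewrite coefC. Qed.
Arguments agree_1 : clear implicits.

Lemma agree_add N f (g : ps K) (p q : {poly K}) :
  agree N f p -> agree N g q -> agree N (ps_add f g) (p + q).
Proof. by move=> Hf Hg i Hi; rewrite coefD /ps_add Hf // Hg. Qed.

Lemma agree_mul N f (g : ps K) (p q : {poly K}) :
  agree N f p -> agree N g q -> agree N (ps_mul f g) (p * q).
Proof.
move=> Hf Hg i Hi; rewrite coefM /ps_mul; apply: eq_bigr => j _.
have Hj : (j < N)%N by apply: leq_ltn_trans Hi; rewrite -ltnS.
by rewrite Hf // Hg //; apply: leq_ltn_trans Hi; exact: leq_subr.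
Qed.

(* Each ring law of [ps K] holds coefficientwise because it holds for the
   polynomial truncations [trunc n.+1]. *)
Lemma ps_mulA f (g : ps K) h : ps_mul f (ps_mul g h) = ps_mul (ps_mul f g) h.
Proof.
apply: psE => n.
rewrite (agree_mul (agree_trunc n.+1 f) (agree_mul (agree_trunc n.+1 g) (agree_trunc n.+1 h))) //.
by rewrite (agree_mul (agree_mul (agree_trunc n.+1 f) (agree_trunc n.+1 g))
             (agree_trunc n.+1 h)) // mulrA.
Qed.

Lemma ps_mulC f (g : ps K) : ps_mul f g = ps_mul g f.
Proof.
apply: psE => n.
rewrite (agree_mul (agree_trunc n.+1 f) (agree_trunc n.+1 g)) //.
by rewrite (agree_mul (agree_trunc n.+1 g) (agree_trunc n.+1 f)) // mulrC.
Qed.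

Lemma ps_mul1l f : ps_mul ps1 f = f.
Proof.
apply: psE => n.
by rewrite (agree_mul (agree_1 n.+1) (agree_trunc n.+1 f)) // mul1r coef_poly ltnSn.
Qed.

Lemma ps_mulDl f (g : ps K) h : ps_mul (ps_add f g) h = ps_add (ps_mul f h) (ps_mul g h).
Proof.
apply: psE => n; set a := agree_trunc n.+1.
rewrite (agree_mul (agree_add (a f) (a g)) (a h)) //.
by rewrite (agree_add (agree_mul (a f) (a h)) (agree_mul (a g) (a h))) // mulrDl.
Qed.

Lemma ps_ring_theory :
  ring_theory ps0 ps1 ps_add ps_mul (fun f g => ps_add f (ps_opp g)) ps_opp (@eq (ps K)).
Proof.
split=> //.
- by move=> f; apply: psE => n; rewrite /ps_add add0r.
- by move=> f g; apply: psE => n; rewrite /ps_add addrC.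
- by move=> f g h; apply: psE => n; rewrite /ps_add addrA.
- exact: ps_mul1l.
- exact: ps_mulC.
- exact: ps_mulA.
- exact: ps_mulDl.
- by move=> f; apply: psE => n; rewrite /ps_add /ps_opp subrr.
Qed.

Add Ring ps_ring : ps_ring_theory.

Lemma ps_mul_coef0 f (g : ps K) : ps_mul f g 0%N = f 0%N * g 0%N.
Proof. by rewrite /ps_mul big_ord_recl big_ord0 addr0 subn0. Qed.

Lemma ps_mul_coef1 f (g : ps K) : ps_mul f g 1%N = f 0%N * g 1%N + f 1%N * g 0%N.
Proof. by rewrite /ps_mul big_ord_recr /= big_ord_recl big_ord0 /= addr0 subn0. Qed.

Lemma ps_t_mul (g : ps K) n : ps_mul ps_t g n = if n is m.+1 then g m else 0.
Proof.
rewrite /ps_mul big_ord_recl /ps_t /= mul0r add0r.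
case: n => [|n]; first by rewrite big_ord0.
rewrite big_ord_recl big1 => [|i _]; last by rewrite /= mul0r.
by rewrite /= mul1r subSS subn0 addr0.
Qed.

Definition ps_shift f : ps K := fun n => f n.+1.

Lemma ps_t_shift f : f 0%N = 0 -> ps_mul ps_t (ps_shift f) = f.
Proof. by move=> f0; apply: psE => -[|n]; rewrite ps_t_mul. Qed.

Lemma ps_dvd_t f : ps_dvd ps_t f <-> f 0%N = 0.
Proof.
split=> [[u ->]|f0]; first by rewrite ps_t_mul.
by exists (ps_shift f); rewrite ps_t_shift.
Qed.

Definition cst x : ps K := fun n => if n == 0%N then x else 0.

Lemma cst_mul x y : ps_mul (cst x) (cst y) = cst (x * y).
Proof.
apply: psE => -[|n]; first by rewrite ps_mul_coef0.
by rewrite /ps_mul /cst big1 // => -[[|i] Hi] _ /=; rewrite ?mulr0 ?mul0r.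
Qed.

Lemma mk2_eta (A : 'M[ps K]_2) :
  A = mk2 (A ord0 ord0) (A ord0 ord_max) (A ord_max ord0) (A ord_max ord_max).
Proof.
apply/matrixP => i j; rewrite /mk2 mxE.
by case: i => [[|[|]]] //= Hi; case: j => [[|[|]]] //= Hj; congr (A _ _); apply: val_inj.
Qed.

Lemma mx_mul_mk2 p q r w (p' q' r' w' : ps K) :
  mx_mul (mk2 p q r w) (mk2 p' q' r' w') =
  mk2 (ps_add (ps_mul p p') (ps_mul q r')) (ps_add (ps_mul p q') (ps_mul q w'))
      (ps_add (ps_mul r p') (ps_mul w r')) (ps_add (ps_mul r q') (ps_mul w w')).
Proof.
apply/matrixP => i j; rewrite /mx_mul /mk2 !mxE /=.
by case: i => [[|[|]]] //= Hi; case: j => [[|[|]]] //= Hj.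
Qed.

Lemma mk2_inj p q r w (p' q' r' w' : ps K) :
  mk2 p q r w = mk2 p' q' r' w' -> [/\ p = p', q = q', r = r' & w = w'].
Proof.
move=> E; have Eij i j := congr1 (fun M : 'M[ps K]_2 => M i j) E.
move: (Eij ord0 ord0) (Eij ord0 ord_max) (Eij ord_max ord0) (Eij ord_max ord_max).
by rewrite /mk2 !mxE.
Qed.

(* A matrix whose determinant is a nonzero constant is invertible: its
   inverse is the scaled adjugate. *)
Lemma mk2_invertible p q r w e :
  ps_add (ps_mul p w) (ps_opp (ps_mul q r)) = cst e -> e != 0 ->
  mx_invertible (mk2 p q r w).
Proof.
move=> det_e e_neq0; set s := cst e^-1.
have s_det : ps_mul s (ps_add (ps_mul p w) (ps_opp (ps_mul q r))) = ps1.
  by rewrite det_e cst_mul mulVf.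
exists (mk2 (ps_mul s w) (ps_mul s (ps_opp q)) (ps_mul s (ps_opp r)) (ps_mul s p)).
by rewrite !mx_mul_mk2 /mx1 -s_det; split; congr mk2; ring.
Qed.

Lemma invertible_diag_units p q r w :
  mx_invertible (mk2 p q r w) -> r 0%N = 0 -> p 0%N != 0 /\ w 0%N != 0.
Proof.
move=> [B [BA AB]] r0; rewrite (mk2_eta B) /mx1 !mx_mul_mk2 in BA AB.
case: (mk2_inj BA) => /(congr1 (fun f => f 0%N)) + _ _ _.
case: (mk2_inj AB) => _ _ _ /(congr1 (fun f => f 0%N)).
rewrite /ps_add !ps_mul_coef0 r0 mulr0 mul0r !addr0 add0r => w_unit p_unit.
by split; apply/eqP => z; [move: p_unit | move: w_unit];
  rewrite z ?mulr0 ?mul0r => /esym/eqP; rewrite oner_eq0.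
Qed.

(* Let phi0, phi1, phi2 be the components of an isomorphism at
   three consecutive vertices 2k, 2k+1, 2k+2; the arrows between them are
   [x_(2k+1) = mk2 t be 0 1] and [x_(2k+2) = mk2 1 be 0 t].  Reading the
   intertwining relations in degrees 0 and 1 gives relations between the
   constant terms of the entries; here (p q r w) is the component at vertex 2k
   and (p' q' r' w') the one at 2k+1. *)
Lemma odd_arrow_coef p q r w p' q' r' w' (be ga : ps K) :
  mx_mul (mk2 p' q' r' w') (mk2 ps_t be ps0 ps1) = mx_mul (mk2 ps_t ga ps0 ps1) (mk2 p q r w) ->
  [/\ r 0%N = 0, p' 0%N = p 0%N + ga 0%N * r' 0%N, w 0%N = r' 0%N * be 0%N + w' 0%N
    & p' 0%N * be 0%N + q' 0%N = ga 0%N * w 0%N].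
Proof.
rewrite !mx_mul_mk2 => /mk2_inj[E11 E12 E21 E22].
move: (congr1 (fun f => f 0%N) E21) (congr1 (fun f => f 1%N) E21).
move: (congr1 (fun f => f 1%N) E11) (congr1 (fun f => f 0%N) E12) (congr1 (fun f => f 0%N) E22).
rewrite /ps_add !ps_mul_coef0 !ps_mul_coef1 /ps_t /ps0 /ps1 /=.
rewrite ?mulr0 ?mul0r ?mulr1 ?mul1r ?addr0 ?add0r.
by move=> e11 -> <- r0 r1; rewrite e11 -r0 -r1 mulr0 addr0.
Qed.

(* The same for the arrow x_(2k+2), from vertex 2k+1 (p q r w) to 2k+2. *)
Lemma even_arrow_coef p q r w p' q' r' w' (be ga : ps K) :
  mx_mul (mk2 p' q' r' w') (mk2 ps1 be ps0 ps_t) = mx_mul (mk2 ps1 ga ps0 ps_t) (mk2 p q r w) ->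
  [/\ r' 0%N = 0, p' 0%N = p 0%N + ga 0%N * r 0%N, p' 0%N * be 0%N = q 0%N + ga 0%N * w 0%N
    & w 0%N = r 0%N * be 0%N + w' 0%N].
Proof.
rewrite !mx_mul_mk2 => /mk2_inj[E11 E12 E21 E22].
move: (congr1 (fun f => f 0%N) E21) (congr1 (fun f => f 1%N) E21).
move: (congr1 (fun f => f 0%N) E11) (congr1 (fun f => f 0%N) E12) (congr1 (fun f => f 1%N) E22).
rewrite /ps_add !ps_mul_coef0 !ps_mul_coef1 /ps_t /ps0 /ps1 /=.
rewrite ?mulr0 ?mul0r ?mulr1 ?mul1r ?addr0 ?add0r.
by move=> -> -> <- r0 r1; rewrite r0 r1 mul0r add0r.
Qed.

Lemma arrow_coef_identity (p0 w0 p1 q1 r1 w1 p2 w2 be1 be2 ga1 ga2 : K) :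
  p1 = p0 + ga1 * r1 -> w0 = r1 * be1 + w1 -> p1 * be1 + q1 = ga1 * w0 ->
  p2 = p1 + ga2 * r1 -> p2 * be2 = q1 + ga2 * w1 -> w1 = r1 * be2 + w2 ->
  (be1 + be2) * p0 = (ga1 + ga2) * w2.
Proof.
move=> E1 E2 E3 E4 E5 E6.
have -> : p0 = p1 - ga1 * r1 by rewrite E1 addrK.
have -> : w2 = w1 - r1 * be2 by rewrite E6 addrC addKr.
have q1E : q1 = ga1 * w0 - p1 * be1 by rewrite -E3 addrC addKr.
apply/eqP; rewrite -subr_eq0 -(subrr (p2 * be2)) {2}E5 q1E E4 E2; apply/eqP; coef_ring.
Qed.

Lemma unit_residue_step (phi0 phi1 phi2 : 'M[ps K]_2) (be1 be2 ga1 ga2 : ps K) :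
  mx_invertible phi0 -> mx_invertible phi2 ->
  mx_mul phi1 (mk2 ps_t be1 ps0 ps1) = mx_mul (mk2 ps_t ga1 ps0 ps1) phi0 ->
  mx_mul phi2 (mk2 ps1 be2 ps0 ps_t) = mx_mul (mk2 ps1 ga2 ps0 ps_t) phi1 ->
  (be1 0%N + be2 0%N == 0) = (ga1 0%N + ga2 0%N == 0).
Proof.
rewrite (mk2_eta phi0) (mk2_eta phi1) (mk2_eta phi2) => inv0 inv2.
move=> /odd_arrow_coef[r0 E1 E2 E3] /even_arrow_coef[r2 E4 E5 E6].
have [p0_neq0 _] := invertible_diag_units inv0 r0.
have [_ w2_neq0] := invertible_diag_units inv2 r2.
have := arrow_coef_identity E1 E2 E3 E4 E5 E6 => /(congr1 (eq_op^~ 0)).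
by rewrite !mulf_eq0 (negbTE p0_neq0) (negbTE w2_neq0) !orbF.
Qed.

Lemma iso_residues (b c : nat -> ps K) : Miso b c ->
  forall k, (k < 5)%N -> (Bsum b k.*2.+1 0%N == 0) = (Bsum c k.*2.+1 0%N == 0).
Proof.
move=> [phi [phi_inv phi_arrows]] k lt_k5.
have [x_odd _] := phi_arrows k.*2.+1 ltac:(lia).
have [x_even _] := phi_arrows k.*2.+2 ltac:(lia).
rewrite modn_small /xmap /= ?odd_double in x_odd x_even; last by lia.
apply: unit_residue_step x_odd x_even; apply: phi_inv; first by lia.
exact: ltn_pmod.
Qed.

Definition conic (a d g x y : K) : K := y * d - x * a - g * (x * y).

Lemma conic_origin (a d g : K) : conic a d g 0 0 = 0.
Proof. by rewrite /conic !mul0r mulr0 !subr0. Qed.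

Lemma conic_through_two_points (x1 y1 x2 y2 : K) :
  x1 != 0 -> y1 != 0 -> x2 != 0 -> y2 != 0 -> x1 != x2 -> y1 != y2 ->
  exists a d g : K, [/\ a != 0, d != 0, conic a d g x1 y1 = 0 & conic a d g x2 y2 = 0].
Proof.
move=> x1_neq0 y1_neq0 x2_neq0 y2_neq0 x12 y12.
exists (y1 * y2 * (x2 - x1)), (x1 * x2 * (y2 - y1)), (x1 * y2 - x2 * y1).
split; rewrite /conic ?mulf_neq0 // ?subr_eq0 1?eq_sym //; coef_ring.
Qed.

Lemma sum_over_support (f : nat -> K) (s : seq nat) n k :
  uniq s -> (forall j, (j < n)%N -> j \notin s -> f j = 0) -> (k <= n)%N ->
  \sum_(j < k) f j = \sum_(j <- s | (j < k)%N) f j.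
Proof.
move=> s_uniq f_supp le_kn; rewrite -(big_mkord xpredT).
rewrite -(@big_rmcond_in _ _ _ _ _ (mem s)) => [|j]; last first.
  rewrite mem_iota => /andP[_ lt_jk] j_notin; apply: f_supp j_notin.
  by apply: leq_trans le_kn; rewrite add0n subn0 in lt_jk.
rewrite -[LHS]big_filter -[RHS]big_filter; apply: perm_big; apply: uniq_perm.
- exact/filter_uniq/iota_uniq.
- exact: filter_uniq.
by move=> j; rewrite !mem_filter mem_iota add0n subn0 andbC.
Qed.

(* If exactly three residues k1 < k2 < k3 are nonzero, for both families,
   and both families sum to zero, the partial sums visit only the origin,
   P = p_k1 and Q = p_k1 + p_k2 = - p_k3, so a conic through these exists. *)
Lemma conic_through_partial_sums (be ga : nat -> K) k1 k2 k3 :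
  (k1 < k2 < k3)%N -> (k3 < 5)%N ->
  (forall k, (k < 5)%N -> (be k != 0) = (k \in [:: k1; k2; k3])) ->
  (forall k, (k < 5)%N -> (ga k != 0) = (k \in [:: k1; k2; k3])) ->
  \sum_(k < 5) be k = 0 -> \sum_(k < 5) ga k = 0 ->
  exists a d g : K, [/\ a != 0, d != 0 & forall k, (k <= 5)%N ->
    conic a d g (\sum_(j < k) be j) (\sum_(j < k) ga j) = 0].
Proof.
move=> /andP[lt12 lt23] lt3 be_supp ga_supp be_sum ga_sum.
have uniq_s : uniq [:: k1; k2; k3] by rewrite /= !inE; lia.
pose supported (f : nat -> K) := forall k, (k < 5)%N -> (f k != 0) = (k \in [:: k1; k2; k3]).
have partial f : supported f ->
    forall k, (k <= 5)%N -> \sum_(j < k) f j = \sum_(j <- [:: k1; k2; k3] | (j < k)%N) f j.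
  move=> f_supp k le_k5; apply: sum_over_support le_k5 => // j lt_j5.
  by rewrite -f_supp // negbK => /eqP.
have [be_s ga_s] := (partial _ be_supp, partial _ ga_supp).
have nz f : supported f ->
    [/\ f k1 != 0, f k2 != 0 & f k3 != 0].
  by move=> f_supp; rewrite !f_supp ?inE ?eqxx ?orbT //; lia.
have [be1 be2 be3] := nz _ be_supp; have [ga1 ga2 ga3] := nz _ ga_supp.
have total f : supported f ->
    \sum_(k < 5) f k = 0 -> f k1 + f k2 = - f k3.
  move=> f_supp; rewrite partial // !big_cons big_nil !ifT; try lia.
  by rewrite addr0 addrA => /eqP; rewrite addr_eq0 => /eqP.
have [be12 ga12] := (total _ be_supp be_sum, total _ ga_supp ga_sum).
have [be12_neq0 ga12_neq0] : be k1 + be k2 != 0 /\ ga k1 + ga k2 != 0.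
  by rewrite be12 ga12 !oppr_eq0.
have be_ne : be k1 != be k1 + be k2 by rewrite eq_sym addrC -subr_eq0 addrK.
have ga_ne : ga k1 != ga k1 + ga k2 by rewrite eq_sym addrC -subr_eq0 addrK.
have [a [d [g [a_neq0 d_neq0 onP onQ]]]] :=
  conic_through_two_points be1 ga1 be12_neq0 ga12_neq0 be_ne ga_ne.
exists a, d, g; split=> // k le_k5; rewrite be_s // ga_s // !big_cons !big_nil.
have [h1|h1] := ltnP k1 k; have [h2|h2] := ltnP k2 k; have [h3|h3] := ltnP k3 k;
  try (exfalso; move: lt12 lt23 h1 h2 h3; clear; lia);
  rewrite ?addr0 ?addrA ?conic_origin //.
by rewrite be12 ga12 !addNr conic_origin.
Qed.

Definition psum (b : nat -> ps K) (v : nat) : ps K := fun n => \sum_(1 <= i < v.+1) b i n.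

Lemma psum0 (b : nat -> ps K) : psum b 0 = ps0.
Proof. by apply: psE => n; rewrite /psum big_geq. Qed.

Lemma psumS (b : nat -> ps K) v : psum b v.+1 = ps_add (psum b v) (b v.+1).
Proof. by apply: psE => n; rewrite /psum /ps_add big_nat_recr. Qed.

Lemma psum_even (b : nat -> ps K) k n : psum b k.*2 n = \sum_(j < k) Bsum b j.*2.+1 n.
Proof.
elim: k => [|k IH]; first by rewrite psum0 big_ord0.
by rewrite doubleS !psumS big_ord_recr /= -IH /ps_add /Bsum addrA.
Qed.

Lemma psum_period (b : nat -> ps K) : sum_zero b -> psum b 10 = psum b 0.
Proof. by move=> b_sum; rewrite psum0; apply: psE; exact: b_sum. Qed.

Section Frames.

Variables a d g : K.

(* The series version of the conic form, and the two shapes of components of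
   the isomorphism: at odd vertices [odd_frame X Y], at even vertices its
   conjugate by diag(1, t), which requires t | conic_ps X Y. *)
Definition conic_ps (X Y : ps K) : ps K :=
  ps_add (ps_add (ps_mul Y (cst d)) (ps_opp (ps_mul X (cst a))))
         (ps_opp (ps_mul (cst g) (ps_mul X Y))).

Definition frame_p (Y : ps K) : ps K := ps_add (cst a) (ps_mul (cst g) Y).
Definition frame_w (X : ps K) : ps K := ps_add (cst d) (ps_opp (ps_mul (cst g) X)).

Definition odd_frame (X Y : ps K) : 'M[ps K]_2 :=
  mk2 (frame_p Y) (conic_ps X Y) (cst g) (frame_w X).
Definition even_frame (X Y : ps K) : 'M[ps K]_2 :=
  mk2 (frame_p Y) (ps_shift (conic_ps X Y)) (ps_mul ps_t (cst g)) (frame_w X).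

Lemma conic_ps_coef0 X Y : conic_ps X Y 0%N = conic a d g (X 0%N) (Y 0%N).
Proof. by rewrite /conic_ps /ps_add /ps_opp !ps_mul_coef0. Qed.

Lemma frame_det X Y :
  ps_add (ps_mul (frame_p Y) (frame_w X)) (ps_opp (ps_mul (conic_ps X Y) (cst g))) = cst (a * d).
Proof. by rewrite -cst_mul /frame_p /frame_w /conic_ps; ring. Qed.

Lemma odd_frame_invertible X Y : a * d != 0 -> mx_invertible (odd_frame X Y).
Proof. exact: mk2_invertible (frame_det X Y). Qed.

Lemma even_frame_invertible X Y :
  a * d != 0 -> conic a d g (X 0%N) (Y 0%N) = 0 -> mx_invertible (even_frame X Y).
Proof.
move=> ad_neq0 on_conic; apply: (mk2_invertible _ ad_neq0); rewrite -(frame_det X Y).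
by rewrite -{2}(@ps_t_shift (conic_ps X Y)) ?conic_ps_coef0 //; ring.
Qed.

(* The frames intertwine the arrows of M(b) and M(c): passing from vertex
   v - 1 to v adds (be, ga) = (b_v, c_v) to the partial sums (X, Y).  These
   are polynomial identities, once t * (conic_ps / t) = conic_ps. *)
Lemma odd_vertex_arrows X Y (be ga : ps K) :
  conic a d g (X 0%N) (Y 0%N) = 0 ->
  mx_mul (odd_frame (ps_add X be) (ps_add Y ga)) (mk2 ps_t be ps0 ps1) =
    mx_mul (mk2 ps_t ga ps0 ps1) (even_frame X Y) /\
  mx_mul (even_frame X Y) (mk2 ps1 (ps_opp be) ps0 ps_t) =
    mx_mul (mk2 ps1 (ps_opp ga) ps0 ps_t) (odd_frame (ps_add X be) (ps_add Y ga)).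
Proof.
rewrite -conic_ps_coef0 => /ps_t_shift; rewrite /even_frame.
move: (ps_shift _) => Q tQ; rewrite /odd_frame !mx_mul_mk2 /frame_p /frame_w /conic_ps in tQ *.
by split; congr mk2; ring [tQ].
Qed.

Lemma even_vertex_arrows X Y (be ga : ps K) :
  conic a d g (ps_add X be 0%N) (ps_add Y ga 0%N) = 0 ->
  mx_mul (even_frame (ps_add X be) (ps_add Y ga)) (mk2 ps1 be ps0 ps_t) =
    mx_mul (mk2 ps1 ga ps0 ps_t) (odd_frame X Y) /\
  mx_mul (odd_frame X Y) (mk2 ps_t (ps_opp be) ps0 ps1) =
    mx_mul (mk2 ps_t (ps_opp ga) ps0 ps1) (even_frame (ps_add X be) (ps_add Y ga)).
Proof.
rewrite -conic_ps_coef0 => /ps_t_shift; rewrite /even_frame.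
move: (ps_shift _) => Q tQ; rewrite /odd_frame !mx_mul_mk2 /frame_p /frame_w /conic_ps in tQ *.
by split; congr mk2; ring [tQ].
Qed.

Definition frame (b c : nat -> ps K) (v : nat) : 'M[ps K]_2 :=
  if odd v then odd_frame (psum b v) (psum c v) else even_frame (psum b v) (psum c v).

Lemma iso_of_conic (b c : nat -> ps K) :
  sum_zero b -> sum_zero c -> a * d != 0 ->
  (forall k, (k <= 5)%N -> conic a d g (psum b k.*2 0%N) (psum c k.*2 0%N) = 0) ->
  Miso b c.
Proof.
move=> b_sum c_sum ad_neq0 on_conic.
have conic_even v : ~~ odd v -> (v <= 10)%N -> conic a d g (psum b v 0%N) (psum c v 0%N) = 0.
  move=> /negbTE v_even le_v10; have := odd_double_half v; rewrite v_even add0n => vE.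
  by rewrite -vE; apply: on_conic; rewrite -leq_double vE.
exists (frame b c); split=> [v lt_v10 | [|v] // /andP[_ le_v10]].
  rewrite /frame; case: ifP => v_odd; first exact: odd_frame_invertible.
  by apply: even_frame_invertible; rewrite ?conic_even ?v_odd // ltnW.
have -> : frame b c (v.+1 %% 10) = frame b c v.+1.
  case: (ltngtP v.+1 10) le_v10 => [lt_v10 _|//|->]; first by rewrite modn_small.
  by rewrite /frame /= !psum_period.
rewrite /frame /xmap /ymap /= !psumS; case: (boolP (odd v)) => v_odd /=.
  by apply: even_vertex_arrows; rewrite -!psumS conic_even //= v_odd.
exact/odd_vertex_arrows/conic_even/ltnW.
Qed.

End Frames.

Lemma odd_idxP i : reflect (exists2 k, (k < 5)%N & i = k.*2.+1) (i \in odd_idx).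
Proof.
apply: (iffP idP) => [|[k lt_k5 ->]]; last by case: k lt_k5 => [|[|[|[|[|]]]]].
rewrite !inE => /orP[/eqP->|/orP[/eqP->|/orP[/eqP->|/orP[/eqP->|/eqP->]]]];
  by [exists 0%N | exists 1%N | exists 2%N | exists 3%N | exists 4%N].
Qed.

Definition unit_index (b : nat -> ps K) (i : nat) : bool :=
  (i \in odd_idx) && (Bsum b i 0%N != 0).

Lemma unit_indexE (b : nat -> ps K) i :
  (i \in unit_index b) = (i \in odd_idx) && (Bsum b i 0%N != 0).
Proof. by []. Qed.

Lemma unit_index_list (b : nat -> ps K) (s : seq nat) :
  all (fun i => i \in odd_idx) s ->
  (forall l, l \in s -> ~ ps_dvd ps_t (Bsum b l)) ->
  (forall i, i \in odd_idx -> i \notin s -> ps_dvd ps_t (Bsum b i)) ->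
  s =i unit_index b.
Proof.
move=> /allP s_odd s_units s_nonunits i; rewrite unit_indexE.
have [i_in_s|i_notin_s] := boolP (i \in s).
  rewrite (s_odd i i_in_s); apply/esym/negP => /eqP/ps_dvd_t.
  exact: s_units.
case: (boolP (i \in odd_idx)) => //= i_odd.
by rewrite (ps_dvd_t _).1 ?eqxx //; apply: s_nonunits.
Qed.

Lemma iso_unit_index (b c : nat -> ps K) : Miso b c -> unit_index b =1 unit_index c.
Proof.
move=> iso i; rewrite /unit_index; case: (odd_idxP i) => [[k lt_k5 ->]|] //=.
by rewrite (iso_residues iso lt_k5).
Qed.

Lemma odd_positions (s : seq nat) :
  uniq s -> size s = 3 -> all (fun i => i \in odd_idx) s ->
  exists k1 k2 k3, [/\ (k1 < k2 < k3)%N, (k3 < 5)%N &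
    forall k, (k.*2.+1 \in s) = (k \in [:: k1; k2; k3])].
Proof.
move=> s_uniq s_size s_odd.
have : sorted ltn (sort leq s).
  by rewrite ltn_sorted_uniq_leq sort_uniq s_uniq (sort_sorted leq_total).
have : all (fun i => i \in odd_idx) (sort leq s) by rewrite all_sort.
have mem_s i : (i \in s) = (i \in sort leq s) by rewrite mem_sort.
move: (size_sort leq s) mem_s; rewrite s_size.
case: (sort leq s) => [|i1 [|i2 [|i3 [|]]]] // _ mem_s.
rewrite /= andbT => /and3P[/odd_idxP[k1 _ E1] /odd_idxP[k2 _ E2] /odd_idxP[k3 lt3 E3]].
subst i1 i2 i3; move=> /and3P[]; rewrite !ltnS !ltn_double => lt12 lt23 _.
exists k1, k2, k3; split=> [|//|k]; first by rewrite lt12.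
by rewrite mem_s !inE !eqSS !(inj_eq double_inj).
Qed.

Lemma iso_of_unit_index (b c : nat -> ps K) (s : seq nat) :
  sum_zero b -> sum_zero c -> uniq s -> size s = 3 ->
  s =i unit_index b -> s =i unit_index c -> Miso b c.
Proof.
move=> b_sum c_sum s_uniq s_size sb sc.
have s_odd : all (fun i => i \in odd_idx) s.
  by apply/allP => i; rewrite sb unit_indexE => /andP[].
have [k1 [k2 [k3 [lt123 lt3 pos]]]] := odd_positions s_uniq s_size s_odd.
have supp (f : nat -> ps K) : s =i unit_index f ->
    forall k, (k < 5)%N -> (Bsum f k.*2.+1 0%N != 0) = (k \in [:: k1; k2; k3]).
  move=> sf k lt_k5; rewrite -pos sf unit_indexE.
  by have /odd_idxP -> : exists2 j, (j < 5)%N & k.*2.+1 = j.*2.+1 by exists k.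
have total (f : nat -> ps K) : sum_zero f -> \sum_(k < 5) Bsum f k.*2.+1 0%N = 0.
  by move=> f_sum; rewrite -psum_even psum_period // psum0.
have [a [d [g [a_neq0 d_neq0 on_conic]]]] :=
  conic_through_partial_sums lt123 lt3 (supp b sb) (supp c sc) (total b b_sum) (total c c_sum).
apply: (@iso_of_conic a d g) => // [|k le_k5]; first by rewrite mulf_neq0.
by rewrite !psum_even; exact: on_conic.
Qed.

End Theory.

Theorem theorem2p3 (b c : nat -> ps CC) (i1 i2 i3 j1 j2 j3 : nat) :
  sum_zero b -> sum_zero c ->
  all (fun i => i \in odd_idx) [:: i1; i2; i3] -> uniq [:: i1; i2; i3] ->
  (forall l, l \in [:: i1; i2; i3] -> ~ ps_dvd ps_t (Bsum b l)) ->
  (forall i, i \in odd_idx -> i \notin [:: i1; i2; i3] -> ps_dvd ps_t (Bsum b i)) ->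
  all (fun j => j \in odd_idx) [:: j1; j2; j3] -> uniq [:: j1; j2; j3] ->
  (forall l, l \in [:: j1; j2; j3] -> ~ ps_dvd ps_t (Bsum c l)) ->
  (forall j, j \in odd_idx -> j \notin [:: j1; j2; j3] -> ps_dvd ps_t (Bsum c j)) ->
  (Miso b c <-> [:: i1; i2; i3] =i [:: j1; j2; j3]).
Proof.
move=> b_sum c_sum i_odd i_uniq i_units i_nonunits j_odd _ j_units j_nonunits.
have units_b := unit_index_list i_odd i_units i_nonunits.
have units_c := unit_index_list j_odd j_units j_nonunits.
split=> [/iso_unit_index same_units x | same_lists].
  by rewrite units_b units_c; exact: same_units.
apply: (iso_of_unit_index b_sum c_sum i_uniq) => // x.
by rewrite same_lists units_c.
Qed.
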